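(* Let $Q_t$ and $Q'_t$ be two instances of the Data Collection process with the same graph, sink, sources, rate vector $\bm{J}$ and parameter $\beta$, with initial states satisfying $Q_0\preceq Q'_0$. Then for every $t\ge0$, $Q_t$ is stochastically dominated by $Q'_t$; in particular $\Pr[Q_t(v)>0]\le\Pr[Q'_t(v)>0]$ for all $v\in V\setminus\{u_s\}$.
   Context: Partial order on $(\mathbb{N}\cup\{0\})^{V\setminus\{u_s\}}$: $\bm{x}\preceq\bm{y}$ iff $\bm{x}_v\le\bm{y}_v$ for all $v$. A function $f$ on this set is increasing if $\bm{x}\preceq\bm{y}$ implies $f(\bm{x})\le f(\bm{y})$. A random vector $X$ is stochastically dominated by $Y$ if $\mathbb{E}[f(X)]\le\mathbb{E}[f(Y)]$ for every increasing $f$. Data Collection process: on a connected undirected graph $G=(V,E,w)$ with positive weights and $d_u=\sum_{v:(u,v)\in E}w_{uv}$, fix a sink $u_s\in V$ and a set of sources $V_s\subseteq V\setminus\{u_s\}$, with relative rate vector $\bm{J}$ ($\bm{J}_v>0$ for $v\in V_s$, $0$ for other $v\ne u_s$, $\bm{J}_{u_s}=-\sum_{v\ne u_s}\bm{J}_v$) and $\beta>0$ with $\beta\bm{J}_v\le1$. The process is the discrete-time Markov chain $\{Q_t\}$ on $(\mathbb{N}\cup\{0\})^{V\setminus\{u_s\}}$ ($Q_t(v)$ = queue size at $v$) where at each step each $v\in V_s$ independently generates a new packet with probability $\beta\bm{J}_v$ into its queue, and each $u\ne u_s$ with nonempty queue picks one packet and a neighbor $v$ with probability $w_{uv}/d_u$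 and transmits the packet to $v$ (added to $v$'s queue if $v\ne u_s$, removed from the system if $v=u_s$). *)

From HB Require Import structures.
From mathcomp Require Import all_boot all_order all_algebra.
Set Implicit Arguments. Unset Strict Implicit. Unset Printing Implicit Defensive.
Import Order.TTheory GRing.Theory Num.Theory.
Local Open Scope ring_scope.

Definition NS (V : finType) (us : V) : finType := {v : V | v != us}.

Definition state (V : finType) (us : V) := NS us -> nat.

Definition state_le (V : finType) (us : V) (x y : state us) : Prop :=
  forall v, (x v <= y v)%N.

Definition increasing (R : realFieldType) (V : finType) (us : V)
  (f : state us -> R) : Prop :=
  forall x y : state us, state_le x y -> f x <= f y.

Definition deg (R : realFieldType) (V : finType) (E : rel V) (w : V -> V -> R)
  (u : V) : R := \sum_(v | E u v) w u v.

(* Next state given current state x, generation outcomes g, and chosen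
   neighbours c (c u is only relevant when x u > 0). *)
Definition next (V : finType) (us : V) (x : state us)
  (g : {ffun NS us -> bool}) (c : {ffun NS us -> V}) : state us :=
  fun v => (x v + g v - (0 < x v) + \sum_(u : NS us | (0 < x u) && (c u == val v)) 1)%N.

Definition gen_prob (R : realFieldType) (V : finType) (us : V) (beta : R)
  (J : V -> R) (g : {ffun NS us -> bool}) : R :=
  \prod_(v : NS us) (if g v then beta * J (val v) else 1 - beta * J (val v)).

(* Probability of the neighbour choices; empty queues make a dummy
   deterministic choice (c u = u). *)
Definition choice_prob (R : realFieldType) (V : finType) (E : rel V)
  (w : V -> V -> R) (us : V) (x : state us) (c : {ffun NS us -> V}) : R :=
  \prod_(u : NS us)
    (if (0 < x u)%N then (if E (val u) (c u) then w (val u) (c u) / deg E w (val u) else 0)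
     else (c u == val u)%:R).

(* One-step transition operator: (P f)(x) = E[f(Q_{t+1}) | Q_t = x]. *)
Definition Pstep (R : realFieldType) (V : finType) (E : rel V) (w : V -> V -> R)
  (us : V) (beta : R) (J : V -> R) (f : state us -> R) (x : state us) : R :=
  \sum_(g : {ffun NS us -> bool}) \sum_(c : {ffun NS us -> V})
     gen_prob beta J g * choice_prob E w x c * f (next x g c).

(* expect t f x = E[f(Q_t)] for the process started at Q_0 = x. *)
Fixpoint expect (R : realFieldType) (V : finType) (E : rel V) (w : V -> V -> R)
  (us : V) (beta : R) (J : V -> R) (t : nat) (f : state us -> R) (x : state us) : R :=
  match t with
  | 0%N => f x
  | t'.+1 => Pstep E w beta J (expect E w beta J t' f) x
  end.

Definition prob_nonempty (R : realFieldType) (V : finType) (E : rel V)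
  (w : V -> V -> R) (us : V) (beta : R) (J : V -> R) (t : nat) (x : state us)
  (v : NS us) : R :=
  expect E w beta J t (fun y : state us => ((0 < y v)%N)%:R) x.

From Pilot Require Import Defs.
From HB Require Import structures.
From mathcomp Require Import all_boot all_order all_algebra.
From mathcomp Require Import zify.
From Stdlib Require Import FunctionalExtensionality.
Set Implicit Arguments. Unset Strict Implicit. Unset Printing Implicit Defensive.
Import Order.TTheory GRing.Theory Num.Theory.
Local Open Scope ring_scope.

(* Run two copies of the chain with the SAME randomness: the same packet
   generations g and, at every vertex whose queue is nonempty in the smaller
   copy, the same neighbour choice.  Then the map "current state -> next
   state" is monotone (next_mono).  Averaging over the randomness, the
   one-step operator Pstep sends increasing functions to increasing ones
   (Pstep_mono): it suffices to compare a state x with x + e_u (one extra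
   packet at u, choice_avg_incr), because any two ordered states are linked
   by such unit steps (increasing_of_unit_steps).  When u was empty in x,
   the extra packet forces a genuine neighbour choice at u where x made a
   dummy one; the choice kernel factors accordingly (choice_prob_incr) and
   integrating the new choice out recovers the law of the smaller copy
   (sum_reset).  Iterating, expect t f is increasing for increasing f
   (expect_mono), which is the stochastic domination of the theorem;
   Pr[Q_t(v) > 0] is the case of the increasing indicator of y v > 0. *)

Definition incr (I : finType) (x : I -> nat) (u : I) : I -> nat :=
  fun v => (x v + (v == u))%N.

(* A real function on I -> nat that grows under every unit increment is
   monotone for the pointwise order: walk from x to y one packet at a time. *)
Lemma increasing_of_unit_steps (R : realFieldType) (I : finType)
    (F : (I -> nat) -> R) :
  (forall x u, F x <= F (incr x u)) ->
  forall x y : I -> nat, (forall v, x v <= y v)%N -> F x <= F y.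
Proof.
move=> Fincr x y; move Hn : (\sum_v (y v - x v))%N => n.
elim: n x Hn => [|n IH] x Hn xy.
  suff -> : x = y by [].
  apply: functional_extensionality => v; apply/eqP; rewrite eqn_leq xy /=.
  by rewrite -subn_eq0; move/eqP: Hn; rewrite sum_nat_eq0 => /forallP/(_ v).
have [u xu_lt] : exists u, (x u < y u)%N.
  apply/existsP; apply: contraPT Hn => /existsPn xy_eq.
  rewrite (eq_bigr (fun=> 0%N)) ?big1_eq // => v _.
  by apply/eqP; rewrite subn_eq0 leqNgt xy_eq.
apply: le_trans (Fincr x u) (IH _ _ _).
- move: Hn; rewrite (bigD1 u) // [in X in _ -> X](bigD1 u) //= /incr eqxx addn1.
  under [X in _ -> _ + X = n]eq_bigr => i /negbTE -> do rewrite addn0.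
  lia.
- by move=> v; rewrite /incr; case: eqP => [->|]; rewrite ?addn1 ?addn0.
Qed.

Lemma sum1_sub (I : finType) (P Q : pred I) :
  (forall i, P i -> Q i) -> (\sum_(i | P i) 1 <= \sum_(i | Q i) 1)%N.
Proof.
move=> PQ; rewrite big_mkcond [X in (_ <= X)%N]big_mkcond /=.
by apply: leq_sum => i _; case: (boolP (P i)) => [/PQ ->|].
Qed.

Lemma next_mono (V : finType) (us : V) (x y : state us)
    (g : {ffun NS us -> bool}) (c c' : {ffun NS us -> V}) :
  state_le x y ->
  (forall i, (0 < x i)%N -> (0 < y i)%N /\ c i = c' i) ->
  state_le (Defs.next x g c) (Defs.next y g c').
Proof.
move=> xy same_choice v; apply: leq_add.
  by have := xy v; case: (x v) => [|a]; case: (y v) => [|b] //=; lia.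
apply: sum1_sub => i /andP[xi /eqP ci].
by have [-> <-] := same_choice i xi; rewrite ci eqxx.
Qed.

Section ChoiceKernel.
Variables (R : realFieldType) (V : finType) (E : rel V) (w : V -> V -> R) (us : V).
Hypothesis w_pos : forall a b, E a b -> 0 < w a b.
Hypothesis deg_neq0 : forall u : NS us, deg E w (val u) != 0.

Definition nbr_prob (u a : V) : R := if E u a then w u a / deg E w u else 0.

Lemma nbr_prob_ge0 u a : 0 <= nbr_prob u a.
Proof.
rewrite /nbr_prob; case: (boolP (E u a)) => // Eua.
by apply: divr_ge0; [exact: ltW (w_pos Eua)|apply: sumr_ge0 => v /w_pos/ltW].
Qed.

Lemma nbr_prob_sum (u : NS us) : \sum_a nbr_prob (val u) a = 1.
Proof. by rewrite /nbr_prob -big_mkcond /= -big_distrl /= -/(deg E w (val u)) divff. Qed.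

Lemma choice_prob_ge0 (x : state us) (c : {ffun NS us -> V}) : 0 <= choice_prob E w x c.
Proof.
apply: prodr_ge0 => i _; case: ifP => _; last exact: ler0n.
exact: nbr_prob_ge0 (val i) (c i).
Qed.

Lemma choice_prob_support (x y : state us) (c : {ffun NS us -> V}) :
  (forall i, (0 < x i)%N = (0 < y i)%N) ->
  choice_prob E w x c = choice_prob E w y c.
Proof. by move=> supp; apply: eq_bigr => i _; rewrite supp. Qed.

Lemma choice_prob_dummy (x : state us) (u : NS us) (c : {ffun NS us -> V}) :
  x u = 0%N -> c u != val u -> choice_prob E w x c = 0.
Proof. by move=> xu cu; rewrite /choice_prob (bigD1 u) //= xu (negbTE cu) mul0r. Qed.

Definition reset (c : {ffun NS us -> V}) (u : NS us) : {ffun NS us -> V} :=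
  [ffun i => if i == u then val u else c i].

Lemma choice_prob_incr (x : state us) (u : NS us) (c : {ffun NS us -> V}) :
  x u = 0%N ->
  choice_prob E w (incr x u) c = nbr_prob (val u) (c u) * choice_prob E w x (reset c u).
Proof.
move=> xu; rewrite /choice_prob (bigD1 u) //= [in RHS](bigD1 u) //=.
rewrite /incr eqxx xu /reset ffunE !eqxx mul1r; congr (_ * _).
by apply: eq_bigr => i /negbTE ui; rewrite ffunE ui addn0.
Qed.

Lemma sum_reset (u : NS us) (q : V -> R) (G : {ffun NS us -> V} -> R) :
  \sum_(c : {ffun NS us -> V}) q (c u) * G (reset c u) =
  (\sum_a q a) * \sum_(c0 : {ffun NS us -> V} | c0 u == val u) G c0.
Proof.
rewrite big_distrr (partition_big (reset^~ u) (fun c0 => c0 u == val u)) /=;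
  last by move=> c _; rewrite ffunE eqxx.
apply: eq_bigr => c0 /eqP c0u.
rewrite (eq_bigr (fun c : {ffun NS us -> V} => q (c u) * G c0)) => [|c /eqP -> //].
rewrite -big_distrl /=; congr (_ * _).
pose set_at a : {ffun NS us -> V} := [ffun i => if i == u then a else c0 i].
rewrite (reindex_onto set_at (fun c => c u)) /set_at => [|c /eqP <-]; last first.
  by apply/ffunP => i; rewrite !ffunE; case: eqP => [->|].
apply: eq_big => [a|a _]; last by rewrite ffunE eqxx.
rewrite ffunE !eqxx andbT; apply/eqP/ffunP => i; rewrite !ffunE.
by case: eqP => [->|].
Qed.

Lemma choice_avg_incr (f : state us -> R) (x : state us) (u : NS us) g :
  increasing f ->
  \sum_c choice_prob E w x c * f (Defs.next x g c) <=
  \sum_c choice_prob E w (incr x u) c * f (Defs.next (incr x u) g c).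
Proof.
move=> f_incr; have x_le : state_le x (incr x u) by move=> v; exact: leq_addr.
have [xu|xu_pos] := posnP (x u); last first.
  (* u nonempty in x: the same choices couple the two next states. *)
  apply: ler_sum => c _; rewrite (@choice_prob_support x (incr x u)).
    apply: ler_wpM2l; first exact: choice_prob_ge0.
    by apply/f_incr/next_mono => // i xi; split=> //; apply: leq_trans xi _.
  by move=> i; rewrite /incr; case: eqP => [->|]; rewrite ?addn1 ?addn0.
under [X in _ <= X]eq_bigr do rewrite choice_prob_incr // -mulrA.
(* u empty in x: only dummy choices at u count on the left, and on the right
   the genuine choice at u is integrated out against the reset choice. *)
rewrite [X in X <= _](bigID (fun c : {ffun NS us -> V} => c u == val u)) /=.
rewrite [X in _ + X <= _]big1 ?addr0 => [|c cu]; last first.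
  by rewrite (choice_prob_dummy xu cu) mul0r.
rewrite -[X in X <= _]mul1r -(nbr_prob_sum u).
rewrite -(sum_reset u _ (fun c0 => choice_prob E w x c0 * f (Defs.next x g c0))).
apply: ler_sum => c _; apply: ler_wpM2l; first exact: nbr_prob_ge0.
apply: ler_wpM2l; first exact: choice_prob_ge0.
apply/f_incr/next_mono => // i xi; split; first exact: leq_trans xi _.
by rewrite ffunE; case: eqP => // iu; move: xi; rewrite iu xu.
Qed.

End ChoiceKernel.

Section Monotonicity.
Variables (R : realFieldType) (V : finType) (E : rel V) (w : V -> V -> R) (us : V).
Variables (beta : R) (J : V -> R).
Hypothesis w_pos : forall a b, E a b -> 0 < w a b.
Hypothesis deg_neq0 : forall u : NS us, deg E w (val u) != 0.
Hypothesis gen_prob_ge0 : forall g, 0 <= gen_prob (us := us) beta J g.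

Lemma Pstep_mono (f : state us -> R) :
  increasing f -> increasing (Pstep E w beta J f).
Proof.
move=> f_incr; apply: increasing_of_unit_steps => x u.
apply: ler_sum => g _.
under eq_bigr do rewrite -mulrA.
under [X in _ <= X]eq_bigr do rewrite -mulrA.
rewrite -!big_distrr /=; apply: ler_wpM2l; first exact: gen_prob_ge0.
exact: choice_avg_incr.
Qed.

Lemma expect_mono (f : state us -> R) t :
  increasing f -> increasing (expect E w beta J t f).
Proof. by move=> f_incr; elim: t => [|t IH] //=; exact: Pstep_mono. Qed.

End Monotonicity.

(* In a connected graph every non-sink vertex has a neighbour, hence a
   positive weighted degree. *)
Lemma deg_neq0_connected (R : realFieldType) (V : finType) (E : rel V)
    (w : V -> V -> R) (us : V) :
  (forall a b, E a b -> 0 < w a b) -> (forall u v, connect E u v) ->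
  forall u : NS us, deg E w (val u) != 0.
Proof.
move=> w_pos E_conn u; have /connectP[[|a p] /= path_p last_p] := E_conn (val u) us.
  by case/negP: (valP u); apply/eqP; exact: esym last_p.
case/andP: path_p => Eua _; rewrite /deg (bigD1 a) //=; apply/lt0r_neq0.
by rewrite ltr_pwDl ?w_pos //; apply: sumr_ge0 => v /andP[/w_pos/ltW].
Qed.

Theorem claim1 (R : realFieldType) (V : finType) (E : rel V) (w : V -> V -> R)
  (us : V) (Vs : {set V}) (J : V -> R) (beta : R)
  (* connected undirected graph with positive edge weights *)
  (E_sym : symmetric E) (E_irr : irreflexive E)
  (E_conn : forall u v, connect E u v)
  (w_sym : forall u v, w u v = w v u)
  (w_pos : forall u v, E u v -> 0 < w u v)
  (* sources and rates *)
  (us_notin : us \notin Vs)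
  (J_src : forall v, v \in Vs -> 0 < J v)
  (J_other : forall v, v \notin Vs -> v != us -> J v = 0)
  (J_sink : J us = - \sum_(v | v != us) J v)
  (beta_pos : 0 < beta)
  (beta_le : forall v, v != us -> beta * J v <= 1)
  (x0 x0' : state us) (hx : state_le x0 x0') :
  forall t : nat,
    (forall f : state us -> R, increasing f ->
       expect E w beta J t f x0 <= expect E w beta J t f x0') /\
    (forall v : NS us,
       prob_nonempty E w beta J t x0 v <= prob_nonempty E w beta J t x0' v).
Proof.
have deg_neq0 := deg_neq0_connected (us := us) w_pos E_conn.
(* Each generation probability beta * J v lies in [0, 1]. *)
have gen_prob_ge0 g : 0 <= gen_prob (us := us) beta J g.
  apply: prodr_ge0 => v _; have v_ns : val v != us := valP v.
  have J_ge0 : 0 <= J (val v).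
    by case: (boolP (val v \in Vs)) => [/J_src/ltW|/J_other ->].
  by case: (g v); [rewrite mulr_ge0 // ltW|rewrite subr_ge0 beta_le].
have dom t f : increasing f -> expect E w beta J t f x0 <= expect E w beta J t f x0'.
  by move=> f_incr; exact: expect_mono.
move=> t; split=> [|v]; first exact: dom.
apply: dom => x y xy; rewrite ler_nat.
by have := xy v; case: (x v) => [|a]; case: (y v).
Qed.
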